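(* Consider the model below with $M=M_f=N=1$ and $\epsilon_2\ge0$, and let $\bar{\epsilon}_{REE}\in[-\infty,\infty)$ be the number such that a rational expectations equilibrium (REE) exists if and only if $\epsilon_1\ge\bar{\epsilon}_{REE}$. If $\epsilon_1>\bar{\epsilon}_{REE}$, then (i) at most one E-stable REE exists, and (ii) any E-stable REE is of type PP or of type ZP.
   Context: Parameters: $0<\beta<1$, $\sigma,\lambda,\mu>0$, $\psi>1$, $p,q\in(0,1]$. The shock $\epsilon_t$ is a two-state Markov chain on $\{\epsilon_1,\epsilon_2\}$ with transition matrix $K=\begin{pmatrix}p&1-p\\1-q&q\end{pmatrix}$. Model: $x_t=E_t x_{t+1}-\sigma(i_t-E_t\pi_{t+1})+\epsilon_t$, $\pi_t=\lambda x_t+\beta E_t\pi_{t+1}$, $i_t=\max\{\psi\pi_t,-\mu\}$. An REE is a pair $Y_j=(x_j,\pi_j)$, $j=1,2$, with, for $j=1,2$ and $i_j=\max\{\psi\pi_j,-\mu\}$: $x_j=x^e_j-\sigma(i_j-\pi^e_j)+\epsilon_j$, $\pi_j=\lambda x_j+\beta\pi^e_j$, where $(x^e_1,\pi^e_1)=pY_1+(1-p)Y_2$, $(x^e_2,\pi^e_2)=(1-q)Y_1+qY_2$. Types: the ZLB binds in state $j$ if $\psi\pi_j\le-\mu$; type PP (binds in no state), ZP (binds in state 1 only), PZ (binds in state 2 only), ZZ (binds in both). Let $A_P=\frac{1}{1+\lambda\sigma\psi}\begin{pmatrix}1&\sigma-\beta\sigma\psi\\ \lambda&\beta+\lambda\sigma\end{pmatrix}$,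 $A_Z=\begin{pmatrix}1&\sigma\\ \lambda&\beta+\lambda\sigma\end{pmatrix}$, and $I$ the $4\times4$ identity. Define $DT^{PP}=K\otimes A_P-I$, $DT^{ZZ}=K\otimes A_Z-I$, $DT^{ZP}=\begin{pmatrix}pA_Z&(1-p)A_Z\\(1-q)A_P&qA_P\end{pmatrix}-I$, $DT^{PZ}=\begin{pmatrix}pA_P&(1-p)A_P\\(1-q)A_Z&qA_Z\end{pmatrix}-I$. An REE of type $i$ is E-stable if all eigenvalues of $DT^i$ have negative real parts. *)

From HB Require Import structures.
From mathcomp Require Import all_boot all_order all_algebra.
From mathcomp Require Import complex.
From mathcomp Require Import constructive_ereal reals.
Set Implicit Arguments. Unset Strict Implicit. Unset Printing Implicit Defensive.
Import Order.TTheory GRing.Theory Num.Theory.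
Local Open Scope ring_scope.

Section Model.
Variable R : realType.

Definition irate (mu psi pi : R) : R := Num.max (psi * pi) (- mu).

Definition is_REE (beta sigma lambda mu psi p q e1 e2 : R)
    (x1 pi1 x2 pi2 : R) : Prop :=
  let xe1 := p * x1 + (1 - p) * x2 in
  let pie1 := p * pi1 + (1 - p) * pi2 in
  let xe2 := (1 - q) * x1 + q * x2 in
  let pie2 := (1 - q) * pi1 + q * pi2 in
  [/\ x1 = xe1 - sigma * (irate mu psi pi1 - pie1) + e1,
      pi1 = lambda * x1 + beta * pie1,
      x2 = xe2 - sigma * (irate mu psi pi2 - pie2) + e2 &
      pi2 = lambda * x2 + beta * pie2].

Definition REE_exists (beta sigma lambda mu psi p q e1 e2 : R) : Prop :=
  exists x1 pi1 x2 pi2, is_REE beta sigma lambda mu psi p q e1 e2 x1 pi1 x2 pi2.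

Inductive ree_type := PP | ZP | PZ | ZZ.

Definition binds (mu psi pi : R) : bool := psi * pi <= - mu.

Definition type_of (mu psi pi1 pi2 : R) : ree_type :=
  match binds mu psi pi1, binds mu psi pi2 with
  | false, false => PP
  | true, false => ZP
  | false, true => PZ
  | true, true => ZZ
  end.

Definition A_P (beta sigma lambda psi : R) : 'M[R]_2 :=
  (1 + lambda * sigma * psi)^-1 *:
    \matrix_(i < 2, j < 2)
      (if (i == 0 :> nat) then (if (j == 0 :> nat) then 1 else sigma - beta * sigma * psi)
       else (if (j == 0 :> nat) then lambda else beta + lambda * sigma)).

Definition A_Z (beta sigma lambda : R) : 'M[R]_2 :=
  \matrix_(i < 2, j < 2)
    (if (i == 0 :> nat) then (if (j == 0 :> nat) then 1 else sigma)
     else (if (j == 0 :> nat) then lambda else beta + lambda * sigma)).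

Definition A_of (beta sigma lambda psi : R) (zlb : bool) : 'M[R]_2 :=
  if zlb then A_Z beta sigma lambda else A_P beta sigma lambda psi.

(* DT^i = ( p A1 (1-p) A1 ; (1-q) A2  q A2 ) - I, with A_j = A_Z if the ZLB
   binds in state j under type i and A_P otherwise; for i = PP, ZZ this is
   exactly K (x) A_P - I, K (x) A_Z - I. *)
Definition DT (beta sigma lambda psi p q : R) (t : ree_type) : 'M[R]_(2 + 2) :=
  let: (z1, z2) := match t with
                   | PP => (false, false) | ZP => (true, false)
                   | PZ => (false, true) | ZZ => (true, true) end in
  let A1 := A_of beta sigma lambda psi z1 in
  let A2 := A_of beta sigma lambda psi z2 in
  block_mx (p *: A1) ((1 - p) *: A1) ((1 - q) *: A2) (q *: A2) - 1%:M.

Definition stable_mx (n : nat) (M : 'M[R]_n) : Prop :=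
  forall z : R[i], eigenvalue (map_mx (fun x : R => x%:C%C) M) z ->
    complex.Re z < 0.

Definition Estable_REE (beta sigma lambda mu psi p q e1 e2 : R)
    (x1 pi1 x2 pi2 : R) : Prop :=
  is_REE beta sigma lambda mu psi p q e1 e2 x1 pi1 x2 pi2 /\
  stable_mx (DT beta sigma lambda psi p q (type_of mu psi pi1 pi2)).

End Model.

From HB Require Import structures.
From mathcomp Require Import all_boot all_order all_algebra.
From mathcomp Require Import complex constructive_ereal reals polyrcf.
From mathcomp Require Import ring lra.
Set Implicit Arguments. Unset Strict Implicit. Unset Printing Implicit Defensive.
Import Order.TTheory GRing.Theory Num.Theory.
Local Open Scope ring_scope.

(** Let [K] be the transition matrix, [tau = 1 + beta + lambda sigma], and for a
  pattern [z] of binding states let [c_j = 0] if the ZLB binds in state [j] and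
  [c_j = psi] otherwise.  Eliminating [x], an REE of pattern [z] solves
  [W_z(1) pi = lambda e + lambda sigma mu u], with [u_j = 1] on binding states and
  [u_j = 0] elsewhere, where
  [W_z(S) = diag(1 + lambda sigma c_j) S^2 - tau S K + beta K^2].  Conversely, every
  [S > 0] making [W_z(S)] singular yields an eigenvector of [DT^z] for the eigenvalue
  [S - 1].  As [det W_z] is a quartic with positive leading coefficient,
  [det W_z(1) <= 0] produces such an [S >= 1]; so an E-stable REE has
  [det W_z(1) > 0], which makes it the only REE of its pattern.  Type ZZ is never
  E-stable because [W_ZZ(S) (1, 1) = (S^2 - tau S + beta) (1, 1)]; for type PZ the
  sign of [e_2 >= 0] forces [det W_PZ(1) < 0]; and subtracting the equations of a PP
  and a ZP equilibrium gives [det W_ZP(1) < 0]. *)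

Section PolynomialRoots.
Context {R : rcfType}.

Lemma lead_coef_Poly (s : seq R) : last 0 s != 0 -> lead_coef (Poly s) = last 0 s.
Proof. by move=> s0; rewrite lead_coefE (PolyK s0) nth_last. Qed.

Lemma poly_root_ge (P : {poly R}) a :
  0 < lead_coef P -> P.[a] <= 0 -> exists2 r, a <= r & root P r.
Proof.
move=> lc_gt0 Pa_le0; have [n Pn_ge] := poly_pinfty_gt_lc lc_gt0.
have a_le : a <= Num.max a n by rewrite le_max lexx.
have Pmax_ge0 : 0 <= P.[Num.max a n].
  by apply: le_trans (ltW lc_gt0) (Pn_ge _ _); rewrite le_max lexx orbT.
have [r] := poly_ivt a_le (introT andP (conj Pa_le0 Pmax_ge0)).
by move=> /andP[ar _] rootr; exists r.
Qed.

Lemma quadratic_root_ge {a b c t : R} :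
  0 < a -> a * t ^+ 2 + b * t + c <= 0 ->
  exists2 S, t <= S & a * S ^+ 2 + b * S + c = 0.
Proof.
move=> a_gt0 at_le0.
have PE S : (Poly [:: c; b; a]).[S] = a * S ^+ 2 + b * S + c.
  by rewrite horner_Poly /=; ring.
have lc_gt0 : 0 < lead_coef (Poly [:: c; b; a]) by rewrite lead_coef_Poly ?gt_eqF.
have Pt_le0 : (Poly [:: c; b; a]).[t] <= 0 by rewrite PE.
by have [S tS /rootP] := poly_root_ge lc_gt0 Pt_le0; rewrite PE; exists S.
Qed.

Lemma det2_quadratic_root_ge {a11 a22 b11 b12 b21 b22 c11 c12 c21 c22 t : R} :
  let d S := (a11 * S ^+ 2 + b11 * S + c11) * (a22 * S ^+ 2 + b22 * S + c22)
             - (b12 * S + c12) * (b21 * S + c21) in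
  0 < a11 -> 0 < a22 -> d t <= 0 -> exists2 S, t <= S & d S = 0.
Proof.
move=> d a11_gt0 a22_gt0 dt_le0.
pose P := Poly [:: c11 * c22 - c12 * c21;
  b11 * c22 + c11 * b22 - b12 * c21 - c12 * b21;
  a11 * c22 + b11 * b22 + c11 * a22 - b12 * b21;
  a11 * b22 + b11 * a22; a11 * a22].
have PE S : P.[S] = d S by rewrite horner_Poly /= /d; ring.
have lc_gt0 : 0 < lead_coef P by rewrite lead_coef_Poly /= ?gt_eqF ?mulr_gt0.
have Pt_le0 : P.[t] <= 0 by rewrite PE.
by have [S tS /rootP] := poly_root_ge lc_gt0 Pt_le0; rewrite PE; exists S.
Qed.

Lemma singular2_kernel (a11 a12 a21 a22 : R) : a11 * a22 - a12 * a21 = 0 ->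
  exists u v : R, [/\ (u != 0) || (v != 0),
     a11 * u + a12 * v = 0 & a21 * u + a22 * v = 0].
Proof.
move=> det0.
have [row1|] := boolP ((a12 != 0) || (a11 != 0)).
  exists a12, (- a11); split; first by rewrite oppr_eq0.
    by ring.
  by rewrite -[RHS]oppr0 -det0; ring.
rewrite negb_or !negbK => /andP[/eqP a12_0 /eqP a11_0].
have [row2|] := boolP ((a22 != 0) || (a21 != 0)).
  exists a22, (- a21); split; first by rewrite oppr_eq0.
    by rewrite a11_0 a12_0; ring.
  by ring.
rewrite negb_or !negbK => /andP[/eqP a22_0 /eqP a21_0].
by exists 1, 0; rewrite a11_0 a12_0 a21_0 a22_0 oner_eq0; split => //; ring.
Qed.

End PolynomialRoots.

Section Cramer2.
Context {R : idomainType}.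

Lemma cramer2_fst (a11 a12 a21 a22 u v : R) :
  (a11 * a22 - a12 * a21) * u = a22 * (a11 * u + a12 * v) - a12 * (a21 * u + a22 * v).
Proof. by ring. Qed.

Lemma cramer2_snd (a11 a12 a21 a22 u v : R) :
  (a11 * a22 - a12 * a21) * v = a11 * (a21 * u + a22 * v) - a21 * (a11 * u + a12 * v).
Proof. by ring. Qed.

Lemma regular2_kernel {a11 a12 a21 a22 u v : R} : a11 * a22 - a12 * a21 != 0 ->
  a11 * u + a12 * v = 0 -> a21 * u + a22 * v = 0 -> u = 0 /\ v = 0.
Proof.
move=> /mulfI det_reg eq1 eq2; split; apply: det_reg; rewrite mulr0.
  by rewrite (cramer2_fst _ _ _ _ u v) eq1 eq2 !mulr0 subr0.
by rewrite (cramer2_snd _ _ _ _ u v) eq1 eq2 !mulr0 subr0.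
Qed.

End Cramer2.

Lemma nonneg_eigenvector_not_stable (R : realType) n (M : 'M[R]_n) (v : 'cV[R]_n) r :
  0 <= r -> v != 0 -> M *m v = r *: v -> ~ stable_mx M.
Proof.
move=> r_ge0 v0 Mv M_stable.
have : eigenvalue M r.
  have /det0P[w w0 wM] : \det (r%:M - M) == 0.
    rewrite -det_tr; apply/det0P; exists v^T; first by rewrite trmx_eq0.
    by rewrite -trmx_mul mulmxBl mul_scalar_mx Mv subrr trmx0.
  apply/eigenvalueP; exists w => //.
  by apply/eqP; move/eqP: wM; rewrite mulmxBr mul_mx_scalar subr_eq0 eq_sym.
rewrite -(eigenvalue_map (real_complex R)) => /M_stable /=.
by rewrite ltNge r_ge0.
Qed.

Section EStability.
Variables (R : realType) (beta sigma lambda psi p q : R).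
Hypotheses (beta_gt0 : 0 < beta) (beta_lt1 : beta < 1) (sigma_gt0 : 0 < sigma)
  (lambda_gt0 : 0 < lambda) (psi_gt1 : 1 < psi)
  (p_le1 : p <= 1) (q_le1 : q <= 1).

Let psi_gt0 : 0 < psi. Proof. exact: lt_trans psi_gt1. Qed.
Let lambda_neq0 : lambda != 0. Proof. exact: lt0r_neq0. Qed.

Definition rate_slope (z : bool) : R := if z then 0 else psi.

Lemma irateE mu pi : irate mu psi pi =
  rate_slope (binds mu psi pi) * pi - (if binds mu psi pi then mu else 0).
Proof. by rewrite /irate /binds /rate_slope maxEle; case: ifP => _; ring. Qed.

Lemma rate_slope_ge0 z : 0 <= rate_slope z.
Proof. by case: z => //=; exact: ltW. Qed.

Definition DT_of (z1 z2 : bool) : 'M[R]_(2 + 2) :=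
  let A1 := A_of beta sigma lambda psi z1 in
  let A2 := A_of beta sigma lambda psi z2 in
  block_mx (p *: A1) ((1 - p) *: A1) ((1 - q) *: A2) (q *: A2) - 1%:M.

Lemma DT_type_of mu pi1 pi2 : DT beta sigma lambda psi p q (type_of mu psi pi1 pi2) =
  DT_of (binds mu psi pi1) (binds mu psi pi2).
Proof. by rewrite /type_of; case: (binds _ _ pi1); case: (binds _ _ pi2). Qed.

Definition col2 (x y : R) : 'cV[R]_2 := \col_i (if i == 0 :> nat then x else y).

Lemma col2_lin a b x y x' y' :
  a *: col2 x y + b *: col2 x' y' = col2 (a * x + b * x') (a * y + b * y').
Proof. by apply/colP => i; rewrite !mxE; case: ifP. Qed.

Lemma col2_neq0 x y : y != 0 -> col2 x y != 0.
Proof. by apply: contraNneq => /colP/(_ ord_max); rewrite !mxE /= => ->. Qed.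

(* [A_of z] is [B_z^-1 C], where [B_z (x, pi) = (x + sigma c pi, pi - lambda x)]
   with [c = rate_slope z] and [C (xe, pie) = (xe + sigma pie, beta pie)]. *)
Lemma A_of_mul_col2 z S x pi xe pie :
  S * (pi - lambda * x) = beta * pie ->
  xe + sigma * pie = S * (x + sigma * rate_slope z * pi) ->
  A_of beta sigma lambda psi z *m col2 xe pie = S *: col2 x pi.
Proof.
move=> eq_pi eq_x; rewrite /rate_slope in eq_x *.
have beta_neq0 : beta != 0 by exact: lt0r_neq0.
have unit_P : 1 + lambda * sigma * psi != 0.
  by rewrite lt0r_neq0 // ltr_pwDl // ltW // !mulr_gt0.
have -> : xe = S * (x + sigma * (if z then 0 else psi) * pi) - sigma * pie by rewrite -eq_x; ring.
have -> : pie = S * (pi - lambda * x) / beta by rewrite eq_pi; field.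
clear eq_x eq_pi.
apply/colP => i; rewrite !mxE !(big_ord_recl 1) big_ord1 !mxE.
by case: z; case: i => [[|[|//]]] ? /=; rewrite !mxE /=; field; rewrite ?beta_neq0 ?unit_P.
Qed.

Lemma DT_of_mul_col z1 z2 S (v1 v2 : 'cV[R]_2) :
  A_of beta sigma lambda psi z1 *m (p *: v1 + (1 - p) *: v2) = S *: v1 ->
  A_of beta sigma lambda psi z2 *m ((1 - q) *: v1 + q *: v2) = S *: v2 ->
  DT_of z1 z2 *m col_mx v1 v2 = (S - 1) *: col_mx v1 v2.
Proof.
move=> eq1 eq2; rewrite mulmxBl mul1mx mul_block_col -!scalemxAl !scalemxAr.
by rewrite -!mulmxDr eq1 eq2 -scale_col_mx scalerBl scale1r.
Qed.

Definition tau : R := 1 + beta + lambda * sigma.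
Definition lead_coef_W z : R := 1 + lambda * sigma * rate_slope z.

(* Written in the shape [a S^2 + b S + c] of [det2_quadratic_root_ge]. *)
Definition w11 z S : R :=
  lead_coef_W z * S ^+ 2 + - (tau * p) * S + beta * (p ^+ 2 + (1 - p) * (1 - q)).
Definition w12 S : R :=
  - (tau * (1 - p)) * S + beta * (p * (1 - p) + (1 - p) * q).
Definition w21 S : R :=
  - (tau * (1 - q)) * S + beta * ((1 - q) * p + q * (1 - q)).
Definition w22 z S : R :=
  lead_coef_W z * S ^+ 2 + - (tau * q) * S + beta * ((1 - q) * (1 - p) + q ^+ 2).
Definition detW z1 z2 S := w11 z1 S * w22 z2 S - w12 S * w21 S.

Lemma lead_coef_W_gt0 z : 0 < lead_coef_W z.
Proof. by rewrite ltr_pwDl // !mulr_ge0 ?rate_slope_ge0 // ltW. Qed.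

Lemma DT_of_not_stable_of_detW z1 z2 S :
  1 <= S -> detW z1 z2 S = 0 -> ~ stable_mx (DT_of z1 z2).
Proof.
move=> S_ge1 /singular2_kernel[pi1 [pi2 [pi_neq0 W1 W2]]].
have S_neq0 : S != 0 by rewrite lt0r_neq0 // (lt_le_trans ltr01).
pose pie1 := p * pi1 + (1 - p) * pi2; pose pie2 := (1 - q) * pi1 + q * pi2.
pose x1 := (S * pi1 - beta * pie1) / (lambda * S).
pose x2 := (S * pi2 - beta * pie2) / (lambda * S).
pose v := col_mx (col2 x1 pi1) (col2 x2 pi2).
(* [x_j] solves the second equation of [A_of_mul_col2]; the first one is then
   row [j] of [W(S) pi = 0] divided by [- lambda S]. *)
apply: (@nonneg_eigenvector_not_stable _ _ _ v (S - 1)); first by rewrite subr_ge0.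
  by rewrite col_mx_eq0 negb_and; case/orP: pi_neq0 => /col2_neq0->; rewrite ?orbT.
apply: DT_of_mul_col; rewrite !col2_lin; apply: A_of_mul_col2.
- by rewrite /x1 /pie1; field; rewrite S_neq0.
- apply/eqP; rewrite -subr_eq0; apply/eqP.
  transitivity (- (w11 z1 S * pi1 + w12 S * pi2) / (lambda * S)); last first.
    by rewrite W1 oppr0 mul0r.
  by rewrite /x1 /x2 /pie1 /pie2 /w11 /w12 /lead_coef_W /tau; field; rewrite S_neq0.
- by rewrite /x2 /pie2; field; rewrite S_neq0.
- apply/eqP; rewrite -subr_eq0; apply/eqP.
  transitivity (- (w21 S * pi1 + w22 z2 S * pi2) / (lambda * S)); last first.
    by rewrite W2 oppr0 mul0r.
  by rewrite /x1 /x2 /pie1 /pie2 /w21 /w22 /lead_coef_W /tau; field; rewrite S_neq0.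
Qed.

Lemma DT_of_not_stable_of_detW1_le0 z1 z2 : detW z1 z2 1 <= 0 -> ~ stable_mx (DT_of z1 z2).
Proof.
rewrite /detW /w11 /w12 /w21 /w22 => det_le0.
have [S S_ge1 detS] :=
  det2_quadratic_root_ge (lead_coef_W_gt0 z1) (lead_coef_W_gt0 z2) det_le0.
exact: DT_of_not_stable_of_detW S_ge1 detS.
Qed.

Lemma DT_of_ZZ_not_stable : ~ stable_mx (DT_of true true).
Proof.
have [|S S_ge1 rootS] := @quadratic_root_ge _ 1 (- tau) beta 1 ltr01.
  by rewrite /tau; have := mulr_gt0 lambda_gt0 sigma_gt0; lra.
apply: (@DT_of_not_stable_of_detW true true S S_ge1).
have row1 : w12 S = - w11 true S.
  by rewrite -[RHS]addr0 -rootS /w11 /w12 /lead_coef_W /rate_slope; ring.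
have row2 : w21 S = - w22 true S.
  by rewrite -[RHS]addr0 -rootS /w21 /w22 /lead_coef_W /rate_slope; ring.
by rewrite /detW row1 row2; ring.
Qed.

Lemma is_REE_W1 mu e1 e2 x1 pi1 x2 pi2 :
  is_REE beta sigma lambda mu psi p q e1 e2 x1 pi1 x2 pi2 ->
  [/\ lambda * x1 = pi1 - beta * (p * pi1 + (1 - p) * pi2),
      lambda * x2 = pi2 - beta * ((1 - q) * pi1 + q * pi2),
      lambda * e1 = w11 (binds mu psi pi1) 1 * pi1 + w12 1 * pi2
                    - (if binds mu psi pi1 then lambda * sigma * mu else 0) &
      lambda * e2 = w21 1 * pi1 + w22 (binds mu psi pi2) 1 * pi2
                    - (if binds mu psi pi2 then lambda * sigma * mu else 0)].
Proof.
move=> [eq_x1 eq_pi1 eq_x2 eq_pi2].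
have lx1 : lambda * x1 = pi1 - beta * (p * pi1 + (1 - p) * pi2).
  by rewrite {1}eq_pi1; ring.
have lx2 : lambda * x2 = pi2 - beta * ((1 - q) * pi1 + q * pi2).
  by rewrite {1}eq_pi2; ring.
have le1 : lambda * e1 = lambda * x1 - (p * (lambda * x1) + (1 - p) * (lambda * x2))
    + lambda * sigma * (irate mu psi pi1 - (p * pi1 + (1 - p) * pi2)).
  by rewrite {1}eq_x1; ring.
have le2 : lambda * e2 = lambda * x2 - ((1 - q) * (lambda * x1) + q * (lambda * x2))
    + lambda * sigma * (irate mu psi pi2 - ((1 - q) * pi1 + q * pi2)).
  by rewrite {1}eq_x2; ring.
split => //.
  by rewrite le1 lx1 lx2 irateE /w11 /w12 /lead_coef_W /tau; case: binds; ring.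
by rewrite le2 lx1 lx2 irateE /w21 /w22 /lead_coef_W /tau; case: binds; ring.
Qed.

Definition gamma : R := 1 - beta * (p + q - 1).

Lemma gamma_gt0 : 0 < gamma.
Proof.
have := beta_lt1; have := p_le1; have := q_le1; have := beta_gt0.
rewrite /gamma; nra.
Qed.

Lemma w11_at1 z : w11 z 1 = (1 - p) * gamma + lambda * sigma * (rate_slope z - p).
Proof. by rewrite /w11 /lead_coef_W /tau /gamma; ring. Qed.

Lemma w12_at1 : w12 1 = - ((gamma + lambda * sigma) * (1 - p)).
Proof. by rewrite /w12 /tau /gamma; ring. Qed.

Lemma w21_at1 : w21 1 = - ((gamma + lambda * sigma) * (1 - q)).
Proof. by rewrite /w21 /tau /gamma; ring. Qed.

Lemma w22_at1 z : w22 z 1 = (1 - q) * gamma + lambda * sigma * (rate_slope z - q).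
Proof. by rewrite /w22 /lead_coef_W /tau /gamma; ring. Qed.

Lemma w12_w21_at1_ge0 : 0 <= w12 1 * w21 1.
Proof.
have gls_ge0 : 0 <= gamma + lambda * sigma.
  by rewrite ltW // addr_gt0 ?gamma_gt0 ?mulr_gt0.
by rewrite w12_at1 w21_at1 mulrNN mulrACA !mulr_ge0 ?subr_ge0.
Qed.

Lemma w11_P_at1_gt0 : 0 < w11 false 1.
Proof.
rewrite w11_at1 /= ltr_wpDl //.
  by apply: mulr_ge0; [rewrite subr_ge0 | exact: ltW gamma_gt0].
by rewrite !mulr_gt0 // subr_gt0 (le_lt_trans p_le1 psi_gt1).
Qed.

Lemma w22_P_at1_gt0 : 0 < w22 false 1.
Proof.
rewrite w22_at1 /= ltr_wpDl //.
  by apply: mulr_ge0; [rewrite subr_ge0 | exact: ltW gamma_gt0].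
by rewrite !mulr_gt0 // subr_gt0 (le_lt_trans q_le1 psi_gt1).
Qed.

Lemma detW1_PZ_lt0 mu e1 e2 x1 pi1 x2 pi2 : 0 < mu -> 0 <= e2 ->
  is_REE beta sigma lambda mu psi p q e1 e2 x1 pi1 x2 pi2 ->
  binds mu psi pi1 = false -> binds mu psi pi2 = true -> detW false true 1 < 0.
Proof.
move=> mu_gt0 e2_ge0 /is_REE_W1[_ _ _ le2] + bind2; rewrite bind2 in le2.
move: bind2; rewrite /binds => bind2 /negbT; rewrite -ltNge => slack1.
have ls_gt0 := mulr_gt0 lambda_gt0 sigma_gt0.
set A := (gamma + lambda * sigma) * (1 - q).
have w22E : w22 true 1 = A - lambda * sigma by rewrite w22_at1 /A /=; ring.
have le2' : lambda * e2 = - A * (pi1 - pi2) - lambda * sigma * (pi2 + mu).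
  by rewrite le2 w21_at1 w22E /A; ring.
have pi2_lt_pi1 : pi2 < pi1.
  by rewrite -(ltr_pM2l psi_gt0); exact: le_lt_trans bind2 slack1.
have pi1_mu_gt0 : 0 < pi1 + mu.
  by case: (lerP 0 pi1) => pi1_sign; have := psi_gt1; nra.
have w22_lt0 : w22 true 1 < 0.
  rewrite w22E ltNge subr_ge0; apply/negP => ls_le_A.
  have := mulr_ge0 (ltW lambda_gt0) e2_ge0.
  have d_ge0 : 0 <= pi1 - pi2 by rewrite subr_ge0 ltW.
  have := ler_wpM2r d_ge0 ls_le_A.
  have := mulr_gt0 ls_gt0 pi1_mu_gt0.
  lra.
have := w12_w21_at1_ge0; have := pmulr_rlt0 (w22 true 1) w11_P_at1_gt0.
by rewrite /detW w22_lt0; lra.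
Qed.

Lemma detW1_ZP_lt0 mu e1 e2 x1 pi1 x2 pi2 y1 rho1 y2 rho2 : 0 < mu ->
  is_REE beta sigma lambda mu psi p q e1 e2 x1 pi1 x2 pi2 ->
  is_REE beta sigma lambda mu psi p q e1 e2 y1 rho1 y2 rho2 ->
  binds mu psi pi1 = false -> binds mu psi pi2 = false ->
  binds mu psi rho1 = true -> binds mu psi rho2 = false -> detW true false 1 < 0.
Proof.
move=> mu_gt0 /is_REE_W1[_ _ le1 le2] /is_REE_W1[_ _ le1' le2'] B1 B2 B1' B2'.
rewrite B1 B2 in le1 le2; rewrite B1' B2' in le1' le2'.
move: B1 B1'; rewrite /binds => /negbT; rewrite -ltNge => slack1 bind1.
have w11E : w11 false 1 = w11 true 1 + lambda * sigma * psi by rewrite !w11_at1 /=; ring.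
rewrite w11E in le1.
have eq1 : w11 true 1 * (pi1 - rho1) + w12 1 * (pi2 - rho2) =
    - (lambda * sigma * (psi * pi1 + mu)) by lra.
have eq2 : w21 1 * (pi1 - rho1) + w22 false 1 * (pi2 - rho2) = 0 by lra.
have := cramer2_fst (w11 true 1) (w12 1) (w21 1) (w22 false 1) (pi1 - rho1) (pi2 - rho2).
rewrite eq1 eq2 mulr0 subr0 => cramer.
have rho1_lt_pi1 : 0 < pi1 - rho1.
  by rewrite subr_gt0 -(ltr_pM2l psi_gt0); exact: le_lt_trans bind1 slack1.
rewrite -(pmulr_llt0 _ rho1_lt_pi1) [_ * _]cramer mulrN oppr_lt0.
by rewrite mulr_gt0 ?w22_P_at1_gt0 // !mulr_gt0 // -(opprK mu) subr_gt0.
Qed.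

Lemma REE_unique_of_detW1 mu e1 e2 x1 pi1 x2 pi2 y1 rho1 y2 rho2 :
  is_REE beta sigma lambda mu psi p q e1 e2 x1 pi1 x2 pi2 ->
  is_REE beta sigma lambda mu psi p q e1 e2 y1 rho1 y2 rho2 ->
  binds mu psi pi1 = binds mu psi rho1 -> binds mu psi pi2 = binds mu psi rho2 ->
  detW (binds mu psi pi1) (binds mu psi pi2) 1 != 0 ->
  [/\ x1 = y1, pi1 = rho1, x2 = y2 & pi2 = rho2].
Proof.
move=> /is_REE_W1[lx1 lx2 le1 le2] /is_REE_W1[ly1 ly2 le1' le2'] B1 B2 det_neq0.
rewrite -B1 in le1'; rewrite -B2 in le2'.
have eq1 : w11 (binds mu psi pi1) 1 * (pi1 - rho1) + w12 1 * (pi2 - rho2) = 0 by lra.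
have eq2 : w21 1 * (pi1 - rho1) + w22 (binds mu psi pi2) 1 * (pi2 - rho2) = 0 by lra.
have [/eqP + /eqP] := regular2_kernel det_neq0 eq1 eq2.
rewrite !subr_eq0 => /eqP d1 /eqP d2; subst rho1 rho2.
by split => //; apply: (mulfI lambda_neq0); rewrite ?lx1 ?ly1 ?lx2 ?ly2.
Qed.

Lemma Estable_REE_detW1_gt0 mu e1 e2 x1 pi1 x2 pi2 :
  Estable_REE beta sigma lambda mu psi p q e1 e2 x1 pi1 x2 pi2 ->
  0 < detW (binds mu psi pi1) (binds mu psi pi2) 1.
Proof.
case=> _; rewrite DT_type_of ltNge => stable; apply/negP.
by move/DT_of_not_stable_of_detW1_le0.
Qed.

Lemma Estable_REE_nonbinding2 mu e1 e2 x1 pi1 x2 pi2 : 0 < mu -> 0 <= e2 ->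
  Estable_REE beta sigma lambda mu psi p q e1 e2 x1 pi1 x2 pi2 ->
  binds mu psi pi2 = false.
Proof.
move=> mu_gt0 e2_ge0 Y; have [REE stable] := Y.
case B2: (binds mu psi pi2) => //; case B1: (binds mu psi pi1).
  by move: stable; rewrite DT_type_of B1 B2 => /DT_of_ZZ_not_stable.
have := Estable_REE_detW1_gt0 Y; rewrite B1 B2.
by move/lt_trans/(_ (detW1_PZ_lt0 mu_gt0 e2_ge0 REE B1 B2)); rewrite ltxx.
Qed.

Lemma Estable_REE_PP_or_ZP mu e1 e2 x1 pi1 x2 pi2 : 0 < mu -> 0 <= e2 ->
  Estable_REE beta sigma lambda mu psi p q e1 e2 x1 pi1 x2 pi2 ->
  type_of mu psi pi1 pi2 = PP \/ type_of mu psi pi1 pi2 = ZP.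
Proof.
move=> mu_gt0 e2_ge0 /(Estable_REE_nonbinding2 mu_gt0 e2_ge0) B2.
by rewrite /type_of B2; case: binds; [right | left].
Qed.

Lemma Estable_REE_unique mu e1 e2 x1 pi1 x2 pi2 y1 rho1 y2 rho2 : 0 < mu -> 0 <= e2 ->
  Estable_REE beta sigma lambda mu psi p q e1 e2 x1 pi1 x2 pi2 ->
  Estable_REE beta sigma lambda mu psi p q e1 e2 y1 rho1 y2 rho2 ->
  [/\ x1 = y1, pi1 = rho1, x2 = y2 & pi2 = rho2].
Proof.
move=> mu_gt0 e2_ge0 X Y.
have B2 := Estable_REE_nonbinding2 mu_gt0 e2_ge0 X.
have B2' := Estable_REE_nonbinding2 mu_gt0 e2_ge0 Y.
have [REEx _] := X; have [REEy _] := Y.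
have := Estable_REE_detW1_gt0 X; have := Estable_REE_detW1_gt0 Y.
rewrite B2 B2'; case B1: (binds mu psi pi1); case B1': (binds mu psi rho1) => detY detX.
- by apply: (REE_unique_of_detW1 REEx REEy); rewrite ?B1 ?B1' ?B2 ?B2' // lt0r_neq0.
- by have := lt_trans detX (detW1_ZP_lt0 mu_gt0 REEy REEx B1' B2' B1 B2); rewrite ltxx.
- by have := lt_trans detY (detW1_ZP_lt0 mu_gt0 REEx REEy B1 B2 B1' B2'); rewrite ltxx.
- by apply: (REE_unique_of_detW1 REEx REEy); rewrite ?B1 ?B1' ?B2 ?B2' // lt0r_neq0.
Qed.

End EStability.

Theorem proposition7 (R : realType) (beta sigma lambda mu psi p q e1 e2 : R)
  (ebar : \bar R) :
  0 < beta -> beta < 1 -> 0 < sigma -> 0 < lambda -> 0 < mu -> 1 < psi ->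
  0 < p -> p <= 1 -> 0 < q -> q <= 1 -> 0 <= e2 ->
  (* ebar = epsilon_REE in [-oo, oo): an REE exists iff e1' >= ebar *)
  (ebar != +oo)%E ->
  (forall e1' : R,
     REE_exists beta sigma lambda mu psi p q e1' e2 <-> (ebar <= e1'%:E)%E) ->
  (ebar < e1%:E)%E ->
  (* (i) at most one E-stable REE *)
  (forall x1 pi1 x2 pi2 y1 rho1 y2 rho2 : R,
     Estable_REE beta sigma lambda mu psi p q e1 e2 x1 pi1 x2 pi2 ->
     Estable_REE beta sigma lambda mu psi p q e1 e2 y1 rho1 y2 rho2 ->
     [/\ x1 = y1, pi1 = rho1, x2 = y2 & pi2 = rho2]) /\
  (* (ii) any E-stable REE is of type PP or ZP *)
  (forall x1 pi1 x2 pi2 : R,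
     Estable_REE beta sigma lambda mu psi p q e1 e2 x1 pi1 x2 pi2 ->
     type_of mu psi pi1 pi2 = PP \/ type_of mu psi pi1 pi2 = ZP).
Proof.
move=> beta_gt0 beta_lt1 sigma_gt0 lambda_gt0 mu_gt0 psi_gt1 _ p_le1 _ q_le1 e2_ge0 _ _ _.
have unique := Estable_REE_unique beta_gt0 beta_lt1 sigma_gt0 lambda_gt0 psi_gt1 p_le1 q_le1.
have PP_or_ZP := Estable_REE_PP_or_ZP beta_gt0 beta_lt1 sigma_gt0 lambda_gt0 psi_gt1 p_le1 q_le1.
split=> [x1 pi1 x2 pi2 y1 rho1 y2 rho2 X Y | x1 pi1 x2 pi2 X].
  exact: unique mu_gt0 e2_ge0 X Y.
exact: PP_or_ZP mu_gt0 e2_ge0 X.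
Qed.
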